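(* Let $\mu$ be a growth rate and let $V$ be a Lyapunov function for $x'=A(t)x$ such that $|V(\tau,x)|\le C\mu(\tau)^{\mathrm{sign}(\tau)\epsilon}\|x\|$ for all $(\tau,x)$, for some $C>0,\epsilon\ge0$. Let $\mathcal{G}^s_\tau\subset\mathcal{E}^s_\tau$ and $\mathcal{G}^u_\tau\subset\mathcal{E}^u_\tau$ ($\tau\in\mathbb{R}$) be subspaces with $\Psi(t,\tau)\mathcal{G}^s_\tau=\mathcal{G}^s_t$ and $\Psi(t,\tau)\mathcal{G}^u_\tau=\mathcal{G}^u_t$ for all $t,\tau$. Suppose there are $\alpha<0$, $\beta<0$ such that for each $\tau$: (1) for $x\in\mathcal{G}^u_\tau$ and $t\ge\tau$, $V(t,\Psi(t,\tau)x)\ge(\mu(\tau)/\mu(t))^\alpha V(\tau,x)$; (2) for $x\in\mathcal{G}^s_\tau$ and $t\ge\tau$, $|V(t,\Psi(t,\tau)x)|\le(\mu(t)/\mu(\tau))^\beta|V(\tau,x)|$; (3) for $x\in\mathcal{G}^s_\tau\cup\mathcal{G}^u_\tau$, $|V(\tau,x)|\ge\mu(\tau)^{-\mathrm{sign}(\tau)\epsilon}\|x\|/C$. Then for all $t\ge\tau$, $$\|\Psi(t,\tau)|_{\mathcal{G}^s_\tau}\|\le C^2\Big(\frac{\mu(t)}{\mu(\tau)}\Big)^{\beta+\mathrm{sign}(t)\epsilon}\mu(\tau)^{2\mathrm{sign}(\tau)\epsilon},\qquad \|\Psi(t,\tau)^{-1}|_{\mathcal{G}^u_t}\|\le C^2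\Big(\frac{\mu(\tau)}{\mu(t)}\Big)^{-\alpha+\mathrm{sign}(\tau)\epsilon}\mu(t)^{2\mathrm{sign}(t)\epsilon}.$$
   Context: Growth rate: strictly increasing $\mu:\mathbb{R}\to(0,\infty)$, $\mu(0)=1$, $\mu\to\infty$ at $+\infty$, $\mu\to0$ at $-\infty$. $A(t)\in GL(n,\mathbb{R})$ locally integrable, evolution operator $\Psi(t,s)$. Cones $\mathcal{C}^u(W)=\{0\}\cup W^{-1}(0,\infty)$, $\mathcal{C}^s(W)=\{0\}\cup W^{-1}(-\infty,0)$. A continuous $V:\mathbb{R}\times\mathbb{R}^n\to\mathbb{R}$, $V_t=V(t,\cdot)$, is a Lyapunov function if there are $d_s+d_u=n$ with $d_u,d_s$ the maximal dimensions of linear subspaces inside $\mathcal{C}^u(V_\tau),\mathcal{C}^s(V_\tau)$ for each $\tau$, and $V(t,\Psi(t,\tau)x)\ge V(\tau,x)$ for all $t\ge\tau$, $x$. $\mathcal{E}^u_\tau=\bigcap_{t}\Psi(\tau,t)\overline{\mathcal{C}^u(V_t)}$, $\mathcal{E}^s_\tau=\bigcap_t\Psi(\tau,t)\overline{\mathcal{C}^s(V_t)}$. *)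

From HB Require Import structures.
From mathcomp Require Import all_boot all_order all_algebra.
From mathcomp Require Import all_classical all_reals all_analysis.
Set Implicit Arguments. Unset Strict Implicit. Unset Printing Implicit Defensive.
Import Order.TTheory GRing.Theory Num.Theory.
Import numFieldNormedType.Exports.
Local Open Scope classical_set_scope.
Local Open Scope ring_scope.

Section Defs.
Variable R : realType.
Variable n : nat.

Definition enorm (x : 'cV[R]_n) : R := Num.sqrt (\sum_(i < n) x i 0 ^+ 2).

Definition growth_rate (mu : R -> R) : Prop :=
  [/\ {homo mu : x y / x < y},
      (forall x, 0 < mu x),
      mu 0 = 1,
      (mu x @[x --> +oo] --> +oo) &
      (mu x @[x --> -oo] --> 0)].

Definition locally_integrable_GL (A : R -> 'M[R]_n) : Prop :=
  (forall t, A t \in unitmx) /\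
  (forall (a b : R) (i j : 'I_n),
      (@lebesgue_measure R).-integrable `[a, b] (EFin \o (fun u => A u i j))).

Definition evolution_operator (A : R -> 'M[R]_n) (Psi : R -> R -> 'M[R]_n) : Prop :=
  [/\ (forall t, Psi t t = 1%:M),
      (forall t s r, Psi t s *m Psi s r = Psi t r) &
      (forall s t, s <= t -> forall i j : 'I_n,
          (@lebesgue_measure R).-integrable `[s, t]
              (EFin \o (fun u => (A u *m Psi u s) i j)) /\
          Psi t s i j = (i == j)%:R +
              Rintegral (@lebesgue_measure R) `[s, t]
                        (fun u => (A u *m Psi u s) i j))].

Definition cone_u (W : 'cV[R]_n -> R) : set 'cV[R]_n :=
  [set x | x = 0 \/ 0 < W x].
Definition cone_s (W : 'cV[R]_n -> R) : set 'cV[R]_n :=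
  [set x | x = 0 \/ W x < 0].

(* d = maximal dimension of a linear subspace contained in the set K:
   some subspace of dimension d (column space of a rank-d matrix) lies in K,
   and every subspace (column space of some M) lying in K has dimension <= d. *)
Definition max_subspace_dim (K : set 'cV[R]_n) (d : nat) : Prop :=
  (exists M : 'M[R]_(n, d), \rank M = d /\ forall c : 'cV[R]_d, K (M *m c)) /\
  (forall (k : nat) (M : 'M[R]_(n, k)),
      (forall c : 'cV[R]_k, K (M *m c)) -> (\rank M <= d)%N).

Definition lyapunov_function (Psi : R -> R -> 'M[R]_n)
    (V : R -> 'cV[R]_n -> R) : Prop :=
  continuous (fun p : R * 'cV[R]_n => V p.1 p.2) /\
  (exists ds du : nat, (ds + du)%N = n /\
     forall tau, max_subspace_dim (cone_u (V tau)) du /\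
                 max_subspace_dim (cone_s (V tau)) ds) /\
  (forall tau t x, tau <= t -> V tau x <= V t (Psi t tau *m x)).

Definition E_u (Psi : R -> R -> 'M[R]_n) (V : R -> 'cV[R]_n -> R) (tau : R)
  : set 'cV[R]_n :=
  \bigcap_(t in [set: R]) ((fun x => Psi tau t *m x) @` closure (cone_u (V t))).
Definition E_s (Psi : R -> R -> 'M[R]_n) (V : R -> 'cV[R]_n -> R) (tau : R)
  : set 'cV[R]_n :=
  \bigcap_(t in [set: R]) ((fun x => Psi tau t *m x) @` closure (cone_s (V t))).

Definition linear_subspace (G : set 'cV[R]_n) : Prop :=
  G 0 /\ forall (a : R) x y, G x -> G y -> G (a *: x + y).

Definition restr_opnorm (M : 'M[R]_n) (G : set 'cV[R]_n) : R :=
  sup [set enorm (M *m x) | x in [set x | G x /\ enorm x <= 1]].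

End Defs.

From HB Require Import structures.
From mathcomp Require Import all_boot all_order all_algebra.
From mathcomp Require Import all_classical all_reals all_analysis.
From mathcomp Require Import ring lra.
Set Implicit Arguments. Unset Strict Implicit. Unset Printing Implicit Defensive.
Import Order.TTheory GRing.Theory Num.Theory.
Import numFieldNormedType.Exports.
Local Open Scope classical_set_scope.
Local Open Scope ring_scope.

(* Converting norms into Lyapunov values and back costs the weights
   [C mu(s)^(sg(s) eps)] at the two endpoints, while (1) and (2) transport [V]
   along the invariant families. On the unstable family [V >= 0], because
   [E^u_tau] lies in the closure of the cone [V_tau > 0], so (1) can be run
   backwards in time. The two endpoint weights fit into the claimed rates since
   [ln mu(s)] has the sign of [s], hence [sg(r) ln mu(s) <= sg(s) ln mu(s)]
   for every [r]. *)

Lemma enorm0 (R : realType) (n : nat) : enorm (0 : 'cV[R]_n) = 0.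
Proof. by rewrite /enorm big1 ?sqrtr0 // => i _; rewrite mxE expr0n. Qed.

Lemma enorm_ge0 (R : realType) (n : nat) (x : 'cV[R]_n) : 0 <= enorm x.
Proof. exact: sqrtr_ge0. Qed.

Lemma restr_opnorm_le (R : realType) (n : nat) (M : 'M[R]_n)
    (G : set 'cV[R]_n) (K : R) :
  G 0 -> 0 <= K -> (forall x, G x -> enorm (M *m x) <= K * enorm x) ->
  restr_opnorm M G <= K.
Proof.
move=> G0 K0 HK; apply: ge_sup.
  by exists (enorm (M *m 0)), 0 => //; split; rewrite ?enorm0 ?ler01.
move=> _ [x [Gx x1] <-]; apply: (le_trans (HK x Gx)).
by rewrite -[leRHS]mulr1 ler_wpM2l.
Qed.

Lemma closure_cone_u_ge0 (R : realType) (n : nat) (W : 'cV[R]_n -> R) :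
  continuous W -> 0 <= W 0 -> closure (cone_u W) `<=` [set x | 0 <= W x].
Proof.
move=> cW W0; have closedW : closed [set x | 0 <= W x].
  exact: (proj1 (continuous_closedP W) cW _ (@closed_ge R 0)).
rewrite [X in _ `<=` X](proj1 (closure_id _) closedW).
by apply: closureS => x [->|/ltW].
Qed.

Lemma E_u_ge0 (R : realType) (n : nat) (Psi : R -> R -> 'M[R]_n)
    (V : R -> 'cV[R]_n -> R) (tau : R) (x : 'cV[R]_n) :
  Psi tau tau = 1%:M -> continuous (V tau) -> 0 <= V tau 0 ->
  E_u Psi V tau x -> 0 <= V tau x.
Proof.
move=> Psi1 cV V0 /(_ tau I) [w cw <-]; rewrite Psi1 mul1mx.
exact: closure_cone_u_ge0.
Qed.

Lemma evolution_operator_invmx (R : realType) (n : nat) (A : R -> 'M[R]_n)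
    (Psi : R -> R -> 'M[R]_n) (t s : R) :
  evolution_operator A Psi -> invmx (Psi t s) = Psi s t.
Proof.
case=> Psi1 Psi_comp _; have PsiK : Psi t s *m Psi s t = 1%:M.
  by rewrite Psi_comp Psi1.
have [Psi_unit _] := mulmx1_unit PsiK.
by rewrite -[invmx _]mulmx1 -PsiK mulmxA mulVmx // mul1mx.
Qed.

Section GrowthRate.
Variables (R : realType) (mu : R -> R).
Hypothesis mu_growth : growth_rate mu.

Lemma growth_rate_gt0 s : 0 < mu s.
Proof. by case: mu_growth. Qed.

Lemma sg_ln_growth_rate s : Num.sg (ln (mu s)) = Num.sg s.
Proof.
case: mu_growth => mu_incr mu_gt0 mu0 _ _.
case: (ltrgt0P s) => [s_gt0|s_lt0|->]; last by rewrite mu0 ln1.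
- by rewrite !gtr0_sg // ln_gt0 // -mu0 mu_incr.
- by rewrite !ltr0_sg // ln_lt0 // mu_gt0 -mu0 mu_incr.
Qed.

Lemma sg_mul_ln_growth_rate_le r s :
  Num.sg r * ln (mu s) <= Num.sg s * ln (mu s).
Proof.
rewrite -(sg_ln_growth_rate s) -normrEsg (le_trans (ler_norm _)) // normrM.
by rewrite -[leRHS]mul1r ler_wpM2r // normr_sg lern1 leq_b1.
Qed.

Lemma growth_rate_weight_le (e a b : R) : 0 <= e ->
  mu a `^ (Num.sg a * e) * mu b `^ (Num.sg b * e) <=
  (mu a / mu b) `^ (Num.sg a * e) * mu b `^ (2 * Num.sg b * e).
Proof.
move=> e0; have ratio_gt0 : 0 < mu a / mu b by rewrite divr_gt0 ?growth_rate_gt0.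
rewrite -ler_ln ?posrE ?mulr_gt0 ?powR_gt0 ?growth_rate_gt0 //.
rewrite !lnM ?posrE ?powR_gt0 ?growth_rate_gt0 // !ln_powR ln_div ?posrE ?growth_rate_gt0 //.
have := ler_wpM2l e0 (sg_mul_ln_growth_rate_le a b); nra.
Qed.

Lemma growth_rate_weight_chain_le (C e gamma a b v : R) : 0 <= e -> 0 <= v ->
  C * mu a `^ (Num.sg a * e) * ((mu a / mu b) `^ gamma *
    (C * mu b `^ (Num.sg b * e) * v)) <=
  C ^+ 2 * (mu a / mu b) `^ (gamma + Num.sg a * e)
    * mu b `^ (2 * Num.sg b * e) * v.
Proof.
move=> e0 v0; have ratio_gt0 : 0 < mu a / mu b by rewrite divr_gt0 ?growth_rate_gt0.
rewrite powRD ?(gt_eqF ratio_gt0) ?implybT //.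
set q := (mu a / mu b) `^ gamma.
have q_ge0 : 0 <= q by exact: powR_ge0.
have -> : C * mu a `^ (Num.sg a * e) * (q * (C * mu b `^ (Num.sg b * e) * v)) =
  C ^+ 2 * q * v * (mu a `^ (Num.sg a * e) * mu b `^ (Num.sg b * e)) by ring.
have -> : C ^+ 2 * (q * (mu a / mu b) `^ (Num.sg a * e))
    * mu b `^ (2 * Num.sg b * e) * v =
  C ^+ 2 * q * v * ((mu a / mu b) `^ (Num.sg a * e) * mu b `^ (2 * Num.sg b * e))
  by ring.
apply: ler_wpM2l; last exact: growth_rate_weight_le.
by rewrite mulr_ge0 // mulr_ge0 // sqr_ge0.
Qed.

End GrowthRate.

Section LyapunovBounds.
Variables (R : realType) (n : nat) (mu : R -> R) (Psi : R -> R -> 'M[R]_n).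
Variables (V : R -> 'cV[R]_n -> R) (C eps : R) (Gs Gu : R -> set 'cV[R]_n).
Hypotheses (mu_growth : growth_rate mu) (C_gt0 : 0 < C) (eps_ge0 : 0 <= eps).
Hypothesis V_le : forall tau x,
  `|V tau x| <= C * mu tau `^ (Num.sg tau * eps) * enorm x.
Hypothesis V_ge : forall tau x, Gs tau x \/ Gu tau x ->
  mu tau `^ (- (Num.sg tau * eps)) * enorm x / C <= `|V tau x|.

Lemma Lyapunov_V0 tau : V tau 0 = 0.
Proof. by apply/eqP; have := V_le tau 0; rewrite enorm0 mulr0 normr_le0. Qed.

Lemma enorm_le_Lyapunov tau x : Gs tau x \/ Gu tau x ->
  enorm x <= C * mu tau `^ (Num.sg tau * eps) * `|V tau x|.
Proof.
move/V_ge; rewrite powRN; set w := mu tau `^ _.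
have w_gt0 : 0 < w by rewrite powR_gt0 ?growth_rate_gt0.
by rewrite ler_pdivrMr // ler_pdivrMl // [C * w]mulrC -mulrA [`|_| * C]mulrC.
Qed.

Lemma stable_growth_le (beta : R) tau t x :
  `|V t (Psi t tau *m x)| <= (mu t / mu tau) `^ beta * `|V tau x| ->
  Gs t (Psi t tau *m x) ->
  enorm (Psi t tau *m x) <= C ^+ 2 * (mu t / mu tau) `^ (beta + Num.sg t * eps)
                             * mu tau `^ (2 * Num.sg tau * eps) * enorm x.
Proof.
move=> V_decay Gy.
have weight_ge0 s : 0 <= C * mu s `^ (Num.sg s * eps)
  by rewrite mulr_ge0 ?powR_ge0 ?ltW.
apply: (le_trans (enorm_le_Lyapunov (or_introl Gy))).
apply: (le_trans (ler_wpM2l (weight_ge0 t) V_decay)).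
apply: (le_trans (ler_wpM2l (weight_ge0 t) (ler_wpM2l (powR_ge0 _ _) (V_le tau x)))).
exact: growth_rate_weight_chain_le mu_growth _ _ _ _ _ _ eps_ge0 (enorm_ge0 x).
Qed.

Lemma unstable_growth_le (alpha : R) tau t x :
  0 <= V tau x ->
  (mu tau / mu t) `^ alpha * V tau x <= V t (Psi t tau *m x) ->
  Gu tau x ->
  enorm x <= C ^+ 2 * (mu tau / mu t) `^ (- alpha + Num.sg tau * eps)
               * mu t `^ (2 * Num.sg t * eps) * enorm (Psi t tau *m x).
Proof.
move=> Vx_ge0 V_growth Gx.
have weight_ge0 s : 0 <= C * mu s `^ (Num.sg s * eps)
  by rewrite mulr_ge0 ?powR_ge0 ?ltW.
have V_back : V tau x <= (mu tau / mu t) `^ (- alpha) * `|V t (Psi t tau *m x)|.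
  have q_gt0 : 0 < (mu tau / mu t) `^ (- alpha).
    by rewrite powR_gt0 // divr_gt0 ?growth_rate_gt0.
  rewrite -ler_pdivrMl // -powRN opprK (le_trans V_growth) ?ler_norm //.
apply: (le_trans (enorm_le_Lyapunov (or_intror Gx))); rewrite ger0_norm //.
apply: (le_trans (ler_wpM2l (weight_ge0 tau) V_back)).
apply: (le_trans (ler_wpM2l (weight_ge0 tau) (ler_wpM2l (powR_ge0 _ _) (V_le t _)))).
exact: growth_rate_weight_chain_le mu_growth _ _ _ _ _ _ eps_ge0 (enorm_ge0 _).
Qed.

End LyapunovBounds.

Theorem mainTheorem9 (R : realType) (n : nat) (mu : R -> R)
  (A : R -> 'M[R]_n) (Psi : R -> R -> 'M[R]_n) (V : R -> 'cV[R]_n -> R)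
  (C eps alpha beta : R) (Gs Gu : R -> set 'cV[R]_n) :
  growth_rate mu ->
  locally_integrable_GL A ->
  evolution_operator A Psi ->
  lyapunov_function Psi V ->
  0 < C -> 0 <= eps ->
  (forall tau x, `|V tau x| <= C * mu tau `^ (Num.sg tau * eps) * enorm x) ->
  (forall tau, linear_subspace (Gs tau) /\ linear_subspace (Gu tau)) ->
  (forall tau, Gs tau `<=` E_s Psi V tau) ->
  (forall tau, Gu tau `<=` E_u Psi V tau) ->
  (forall t tau, (fun x => Psi t tau *m x) @` Gs tau = Gs t) ->
  (forall t tau, (fun x => Psi t tau *m x) @` Gu tau = Gu t) ->
  alpha < 0 -> beta < 0 ->
  (forall tau t x, Gu tau x -> tau <= t ->
      V t (Psi t tau *m x) >= (mu tau / mu t) `^ alpha * V tau x) ->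
  (forall tau t x, Gs tau x -> tau <= t ->
      `|V t (Psi t tau *m x)| <= (mu t / mu tau) `^ beta * `|V tau x|) ->
  (forall tau x, Gs tau x \/ Gu tau x ->
      `|V tau x| >= mu tau `^ (- (Num.sg tau * eps)) * enorm x / C) ->
  forall t tau, tau <= t ->
    restr_opnorm (Psi t tau) (Gs tau) <=
      C ^+ 2 * (mu t / mu tau) `^ (beta + Num.sg t * eps)
             * mu tau `^ (2 * Num.sg tau * eps)
    /\
    restr_opnorm (invmx (Psi t tau)) (Gu t) <=
      C ^+ 2 * (mu tau / mu t) `^ (- alpha + Num.sg tau * eps)
             * mu t `^ (2 * Num.sg t * eps).
Proof.
move=> mu_growth _ evol [V_cont _] C_gt0 eps_ge0 V_le G_lin _ Gu_E Gs_inv Gu_inv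
  _ _ V_unstable V_stable V_ge t tau le_tau_t.
have [Psi1 Psi_comp _] := evol.
have rate_ge0 (p q r s : R) : 0 <= C ^+ 2 * p `^ r * q `^ s.
  by rewrite mulr_ge0 ?powR_ge0 // mulr_ge0 ?powR_ge0 ?sqr_ge0.
split.
  apply: restr_opnorm_le => [||x Gx]; first by case: (G_lin tau) => -[].
    exact: rate_ge0.
  apply: (stable_growth_le mu_growth C_gt0 eps_ge0 V_le V_ge); first exact: V_stable.
  by rewrite -(Gs_inv t tau); exists x.
rewrite (evolution_operator_invmx _ _ evol).
apply: restr_opnorm_le => [||y Gy]; first by case: (G_lin t) => _ [].
  exact: rate_ge0.
have Gx : Gu tau (Psi tau t *m y) by rewrite -(Gu_inv tau t); exists y.
have PsiK : Psi t tau *m (Psi tau t *m y) = y by rewrite mulmxA Psi_comp Psi1 mul1mx.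
rewrite -{2}PsiK.
apply: (unstable_growth_le mu_growth C_gt0 eps_ge0 V_le V_ge) => //.
- apply: (E_u_ge0 (V := V) (Psi1 tau) ((continuous_curry V_cont).2 tau)).
    by rewrite (Lyapunov_V0 V_le).
  exact: Gu_E.
- exact: V_unstable.
Qed.
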